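(* Let $H$ be a separable Hilbert space with orthonormal basis $\{e_n:n=0,1,2,\ldots\}$. For $n\geq 0$ let $L_n=\mathrm{Span}\{e_k:0\leq k\leq n\}$ and put $L_{-1}=\{0\}$. Let \[ H_{\mathrm{ra}}=\{x\in H: \sup_{n\geq 0} n^k d(x,L_{n-1})<\infty \text{ for all } k=0,1,2,\ldots\}, \] where $0^0=1$ and $d(x,L_{n-1})$ is the distance from $x$ to $L_{n-1}$. For $k\geq 0$ define $q_k(x)=\sup_{n\geq 0} n^k d(x,L_{n-1})$ for $x\in H_{\mathrm{ra}}$. Then $\{q_k:k=0,1,2,\ldots\}$ is a separating family of seminorms on $H_{\mathrm{ra}}$ inducing a Fréchet topology on $H_{\mathrm{ra}}$. Moreover, $x=\sum_{n=0}^\infty a_n(x)e_n\in H$ lies in $H_{\mathrm{ra}}$ if and only if $(a_n(x))_{n\geq 0}\in(s)$, and the map $x\mapsto (a_n(x))_{n\geq 0}$ is a topological isomorphism between the Fréchet spaces $H_{\mathrm{ra}}$ and $(s)$.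
   Context: $(s)$ denotes the space of rapidly decreasing sequences, i.e. complex sequences $(a_n)_{n\geq 0}$ with $\sup_n n^k|a_n|<\infty$ for all $k\geq 0$, with the Fréchet topology induced by the seminorms $(a_n)\mapsto\sup_n n^k|a_n|$, $k=0,1,2,\ldots$. *)

From mathcomp Require Import all_boot all_order all_algebra.
From mathcomp Require Import all_classical all_reals.
From mathcomp Require Import complex.

Set Implicit Arguments.
Unset Strict Implicit.
Unset Printing Implicit Defensive.

Import Order.TTheory GRing.Theory Num.Theory.
Local Open Scope ring_scope.
Local Open Scope classical_set_scope.

Section Defs.
Variable R : realType.
Local Notation C := R[i].

Definition cabs (z : C) : R := Normc.normc z.

Section Hilbert.
Variable H : lmodType C.
Variable ip : H -> H -> C.   (* inner product, linear in the first argument *)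

Definition is_inner_product : Prop :=
  [/\ (forall (a : C) (x y z : H), ip (a *: x + y) z = a * ip x z + ip y z),
      (forall x y : H, ip y x = conjc (ip x y)),
      (forall x : H, 0 <= complex.Re (ip x x)) &
      (forall x : H, ip x x = 0 -> x = 0)].

Definition hnorm (x : H) : R := Num.sqrt (complex.Re (ip x x)).

Definition hcomplete : Prop :=
  forall u : nat -> H,
    (forall eps : R, 0 < eps -> exists N : nat, forall m n : nat,
        (N <= m)%N -> (N <= n)%N -> hnorm (u m - u n) < eps) ->
    exists l : H, forall eps : R, 0 < eps -> exists N : nat, forall n : nat,
        (N <= n)%N -> hnorm (u n - l) < eps.

Definition is_hilbert : Prop := is_inner_product /\ hcomplete.

Definition orthonormal_basis (e : nat -> H) : Prop :=
  (forall i j : nat, ip (e i) (e j) = (i == j)%:R) /\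
  (forall x : H, (forall n : nat, ip x (e n) = 0) -> x = 0).

Variable e : nat -> H.

(* Lspan n = Span{e_k : 0 <= k <= n-1} = L_{n-1}; Lspan 0 = {0} = L_{-1} *)
Definition Lspan (n : nat) : set H :=
  [set x | exists c : nat -> C, x = \sum_(k < n) c k *: e k].

Definition distL (x : H) (n : nat) : R :=
  inf [set hnorm (x - y) | y in Lspan n].

(* n^k as a real number; 0^0 = 1 *)
Definition wt (n k : nat) : R := (n%:R : R) ^+ k.

Definition H_ra : set H :=
  [set x | forall k : nat, has_ubound (range (fun n : nat => wt n k * distL x n))].

Definition q (k : nat) (x : H) : R :=
  sup (range (fun n : nat => wt n k * distL x n)).

Definition coef (x : H) : nat -> C := fun n => ip x (e n).

End Hilbert.

Definition s_space : set (nat -> C) :=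
  [set a | forall k : nat, has_ubound (range (fun n : nat => wt n k * cabs (a n)))].

Definition s_norm (k : nat) (a : nat -> C) : R :=
  sup (range (fun n : nat => wt n k * cabs (a n))).

Section Seminorms.
Variable V : lmodType C.
Variable S : set V.              (* the carrier (a linear subspace of V) *)
Variable p : nat -> V -> R.

Definition subspace : Prop :=
  S 0 /\ (forall (a : C) (x y : V), S x -> S y -> S (a *: x + y)).

Definition seminorm_on (r : V -> R) : Prop :=
  [/\ (forall x, S x -> 0 <= r x),
      (forall x y, S x -> S y -> r (x + y) <= r x + r y) &
      (forall (a : C) x, S x -> r (a *: x) = cabs a * r x)].

Definition separating : Prop :=
  forall x, S x -> (forall k, p k x = 0) -> x = 0.

Definition sn_open (U : set V) : Prop :=
  U `<=` S /\
  forall x, U x -> exists (k : nat) (eps : R), 0 < eps /\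
    [set y | S y /\ forall j : nat, (j <= k)%N -> p j (y - x) < eps] `<=` U.

Definition sn_complete : Prop :=
  forall u : nat -> V, (forall n, S (u n)) ->
    (forall (k : nat) (eps : R), 0 < eps -> exists N : nat, forall m n : nat,
        (N <= m)%N -> (N <= n)%N -> p k (u m - u n) < eps) ->
    exists2 l : V, S l & forall (k : nat) (eps : R), 0 < eps ->
        exists N : nat, forall n : nat, (N <= n)%N -> p k (u n - l) < eps.

Definition frechet_seminorms : Prop :=
  [/\ subspace, (forall k, seminorm_on (p k)), separating & sn_complete].

End Seminorms.

Definition sn_continuous (V W : lmodType C) (S : set V) (p : nat -> V -> R)
  (S' : set W) (p' : nat -> W -> R) (f : V -> W) : Prop :=
  forall U : set W, sn_open S' p' U -> sn_open S p [set x | S x /\ U (f x)].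

Definition top_iso (V W : lmodType C) (S : set V) (p : nat -> V -> R)
  (S' : set W) (p' : nat -> W -> R) (f : V -> W) : Prop :=
  [/\ (forall x, S x -> S' (f x)),
      (forall (a : C) x y, S x -> S y -> f (a *: x + y) = a *: f x + f y),
      sn_continuous S p S' p' f &
      exists g : W -> V,
        [/\ (forall y, S' y -> S (g y)),
            (forall x, S x -> g (f x) = x),
            (forall y, S' y -> f (g y) = y) &
            sn_continuous S' p' S p g]].

End Defs.

From mathcomp Require Import all_boot all_order all_algebra.
From mathcomp Require Import all_classical all_reals.
From mathcomp Require Import complex ring lra.

Set Implicit Arguments.
Unset Strict Implicit.
Unset Printing Implicit Defensive.

Import Order.TTheory GRing.Theory Num.Theory.
Local Open Scope ring_scope.
Local Open Scope classical_set_scope.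

(* For y in L_{n-1} we have a_n(x) = <x - y, e_n>, so |a_n(x)| <= d(x, L_{n-1})
   by Cauchy-Schwarz, and the weighted sups of the coefficients are dominated
   by the q_k.  Conversely, for a in (s) the bound
   (j+1)^2 j^k |a_j| <= s_k + 2 s_{k+1} + s_{k+2} together with
   sum_j 1/(j+1)^2 <= 2 gives
   n^k ||sum_{n <= j < N} a_j e_j|| <= 2 (s_k + 2 s_{k+1} + s_{k+2}), so the
   partial sums converge to a vector with coefficients a, whose q_k obeys the
   same bound.  These two estimates give the characterisation of H_ra and the
   continuity of the coefficient map and of its inverse.  Completeness of H_ra
   comes from that of H, because ||x|| <= q_0(x) and d(., L_{n-1}) is
   1-Lipschitz. *)

Section ComplexModulus.
Variable R : realType.
Implicit Types u v : R[i].

Lemma cabsE u : (cabs u)%:C%C = `|u|.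
Proof. by case: u => a b; rewrite normc_def. Qed.

Lemma cabs_ge0 u : 0 <= cabs u.
Proof. by case: u => a b; exact: sqrtr_ge0. Qed.

Lemma cabs0 : cabs (0 : R[i]) = 0.
Proof. exact: Normc.normc0. Qed.

Lemma cabs1 : cabs (1 : R[i]) = 1.
Proof. exact: Normc.normc1. Qed.

Lemma cabs_eq0 u : cabs u = 0 -> u = 0.
Proof. exact: Normc.eq0_normc. Qed.

Lemma cabsV u : cabs u^-1 = (cabs u)^-1.
Proof. exact: Normc.normcV. Qed.

Lemma cabsD u v : cabs (u + v) <= cabs u + cabs v.
Proof. exact: le_normcD. Qed.

Lemma cabsN u : cabs (- u) = cabs u.
Proof. exact: normcN. Qed.

Lemma cabs_sqr u : ((cabs u) ^+ 2)%:C%C = u * u^*%C.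
Proof. by rewrite -sqr_normc -cabsE -rmorphXn. Qed.

Lemma cabs_small_eq0 u : (forall eps, 0 < eps -> cabs u <= eps) -> u = 0.
Proof.
move=> small; apply: cabs_eq0; apply/le_anti; rewrite cabs_ge0 andbT.
by apply/ler_addgt0Pr => eps eps0; rewrite add0r small.
Qed.

End ComplexModulus.

Lemma homogeneous_of_le (R : realType) (V : lmodType R[i]) (S : set V) (f : V -> R) :
    (forall a x, S x -> S (a *: x)) -> (forall x, S x -> 0 <= f x) ->
    (forall a x, S x -> f (a *: x) <= cabs a * f x) ->
  forall a x, S x -> f (a *: x) = cabs a * f x.
Proof.
move=> SZ f_ge0 fZ_le a x Sx; apply/le_anti; rewrite fZ_le //=.
have [->|a_neq0] := eqVneq a 0; first by rewrite cabs0 mul0r; apply/f_ge0/SZ.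
have a_gt0 : 0 < cabs a.
  by rewrite lt_def cabs_ge0 andbT; apply: contra a_neq0 => /eqP/cabs_eq0 ->.
rewrite -ler_pdivlMl // -cabsV; apply: le_trans (fZ_le _ _ (SZ a x Sx)).
by rewrite scalerA mulVf // scale1r.
Qed.

Section InnerProduct.
Variables (R : realType) (H : lmodType R[i]) (ip : H -> H -> R[i]).
Hypothesis ip_inner : is_inner_product ip.
Local Notation hn := (hnorm ip).
Implicit Types (x y z : H) (a : R[i]).

Lemma ipDl a x y z : ip (a *: x + y) z = a * ip x z + ip y z.
Proof. by case: ip_inner. Qed.

Lemma ip_conj x y : ip y x = (ip x y)^*%C.
Proof. by case: ip_inner. Qed.

Lemma ip0l z : ip 0 z = 0.
Proof.
have := ipDl 1 0 0 z; rewrite scale1r addr0 mul1r => ip00.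
by apply: (addrI (ip 0 z)); rewrite addr0 -ip00.
Qed.

Lemma ipD x y z : ip (x + y) z = ip x z + ip y z.
Proof. by rewrite -{1}[x]scale1r ipDl mul1r. Qed.

Lemma ipZ a x z : ip (a *: x) z = a * ip x z.
Proof. by rewrite -[a *: x]addr0 ipDl ip0l addr0. Qed.

Lemma ipB x y z : ip (x - y) z = ip x z - ip y z.
Proof. by rewrite ipD -scaleN1r ipZ mulN1r. Qed.

Lemma ipZr a x z : ip z (a *: x) = a^*%C * ip z x.
Proof. by rewrite ip_conj ipZ rmorphM /= -ip_conj. Qed.

Lemma ipDr x y z : ip z (x + y) = ip z x + ip z y.
Proof. by rewrite ip_conj ipD rmorphD /= -!ip_conj. Qed.

Lemma ip_self_real x : ip x x = (complex.Re (ip x x))%:C%C.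
Proof.
have := ip_conj x x; case: (ip x x) => a b /= [b0].
by congr (_ +i* _)%C; lra.
Qed.

Lemma hnorm_ge0 x : 0 <= hn x.
Proof. exact: sqrtr_ge0. Qed.

Lemma hnorm_sqr x : hn x ^+ 2 = complex.Re (ip x x).
Proof. by rewrite sqr_sqrtr //; case: ip_inner. Qed.

Lemma hnorm_eq0 x : hn x = 0 -> x = 0.
Proof.
move=> hx0; case: ip_inner => _ _ _; apply.
by rewrite ip_self_real -hnorm_sqr hx0 expr0n.
Qed.

Lemma hnorm0 : hn 0 = 0.
Proof. by rewrite /hnorm ip0l sqrtr0. Qed.

Lemma hnormZ a x : hn (a *: x) = cabs a * hn x.
Proof.
rewrite /hnorm ipZ ipZr mulrA -cabs_sqr ip_self_real -rmorphM /=.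
by rewrite sqrtrM ?sqr_ge0 // sqrtr_sqr ger0_norm ?cabs_ge0.
Qed.

Lemma hnormN x : hn (- x) = hn x.
Proof. by rewrite -scaleN1r hnormZ cabsN cabs1 mul1r. Qed.

Lemma hnormB x y : hn (x - y) = hn (y - x).
Proof. by rewrite -hnormN opprB. Qed.

Lemma Re_ip_combination (al be : R) x y :
  complex.Re (ip (al%:C%C *: x + be%:C%C *: y) (al%:C%C *: x + be%:C%C *: y)) =
  al ^+ 2 * hn x ^+ 2 + be ^+ 2 * hn y ^+ 2 + 2 * al * be * complex.Re (ip x y).
Proof.
rewrite !hnorm_sqr ipD !ipDr !ipZ !ipZr !conjc_real (ip_conj x y).
rewrite [ip x x]ip_self_real [ip y y]ip_self_real !mulrA -!rmorphM !raddfD /=.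
case: (ip x y) => c d /=; rewrite !mul0r !subr0; ring.
Qed.

Lemma ip0r z : ip z 0 = 0.
Proof. by rewrite ip_conj ip0l conjc0. Qed.

Lemma Re_ip_le x y : complex.Re (ip x y) <= hn x * hn y.
Proof.
have [y0|y_neq0] := eqVneq (hn y) 0.
  by rewrite (hnorm_eq0 y0) ip0r hnorm0 mulr0.
set b := complex.Re (ip x y).
have := sqr_ge0 (hn ((hn y ^+ 2)%:C%C *: x + (- b)%:C%C *: y)).
set v := _ + _; rewrite hnorm_sqr {}/v Re_ip_combination -/b => expansion.
have hy_gt0 : 0 < hn y by rewrite lt_def y_neq0 hnorm_ge0.
have hy2_gt0 : 0 < hn y ^+ 2 by rewrite exprn_gt0.
have hx_ge0 := hnorm_ge0 x.
have b_sqr : b ^+ 2 <= (hn x * hn y) ^+ 2 by nra.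
have := mulr_ge0 hx_ge0 (ltW hy_gt0); nra.
Qed.

Lemma cabs_ip_le x y : cabs (ip x y) <= hn x * hn y.
Proof.
set c := ip x y; have := Re_ip_le x (c *: y).
rewrite ipZr mulrC -cabs_sqr /= hnormZ mulrCA => c_sqr.
have [c0|c_neq0] := eqVneq (cabs c) 0; first by rewrite c0 mulr_ge0 ?hnorm_ge0.
have c_gt0 : 0 < cabs c by rewrite lt_def c_neq0 cabs_ge0.
by rewrite -(ler_pM2l c_gt0) -expr2.
Qed.

Lemma hnormD x y : hn (x + y) <= hn x + hn y.
Proof.
have := Re_ip_combination 1 1 x y.
rewrite (_ : (1 : R)%:C%C = 1) // !scale1r -hnorm_sqr => expansion.
have := Re_ip_le x y; have := hnorm_ge0 x; have := hnorm_ge0 y; nra.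
Qed.

End InnerProduct.

Section DistanceToSpan.
Variables (R : realType) (H : lmodType R[i]) (ip : H -> H -> R[i]) (e : nat -> H).
Hypothesis ip_inner : is_inner_product ip.
Local Notation hn := (hnorm ip).
Local Notation dist := (distL ip e).
Implicit Types (x y z : H) (a : R[i]).

Lemma Lspan0 n : Lspan e n 0.
Proof. by exists (fun=> 0); rewrite big1 // => k _; rewrite scale0r. Qed.

Lemma LspanD n y z : Lspan e n y -> Lspan e n z -> Lspan e n (y + z).
Proof.
move=> [c ->] [d ->]; exists (fun k => c k + d k).
by rewrite -big_split; apply: eq_bigr => k _; rewrite scalerDl.
Qed.

Lemma LspanZ n a y : Lspan e n y -> Lspan e n (a *: y).
Proof.
move=> [c ->]; exists (fun k => a * c k).
by rewrite scaler_sumr; apply: eq_bigr => k _; rewrite scalerA.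
Qed.

Lemma distL_le x n y : Lspan e n y -> dist x n <= hn (x - y).
Proof.
move=> span_y; apply: ge_inf; last by exists y.
by exists 0 => _ [z _ <-]; exact: hnorm_ge0.
Qed.

Lemma le_distL x n r : (forall y, Lspan e n y -> r <= hn (x - y)) -> r <= dist x n.
Proof.
move=> lb; apply: lb_le_inf; first by exists (hn (x - 0)), 0; first exact: Lspan0.
by move=> _ [y span_y <-]; exact: lb.
Qed.

Lemma distL_ge0 x n : 0 <= dist x n.
Proof. by apply: le_distL => y _; exact: hnorm_ge0. Qed.

Lemma distL_le_hnorm x n : dist x n <= hn x.
Proof. by rewrite -[x in hn x]subr0; apply: distL_le; exact: Lspan0. Qed.

Lemma distL0 x : dist x 0 = hn x.
Proof.
apply/le_anti; rewrite distL_le_hnorm; apply: le_distL => y [c ->].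
by rewrite big_ord0 subr0.
Qed.

Lemma distL_lipschitz x y n : dist x n <= dist y n + hn (x - y).
Proof.
rewrite -lerBlDr; apply: le_distL => z span_z; rewrite lerBlDr.
apply: le_trans (distL_le x span_z) _.
have -> : x - z = (x - y) + (y - z) by rewrite addrA subrK.
by rewrite addrC hnormD.
Qed.

Lemma distLD x y n : dist (x + y) n <= dist x n + dist y n.
Proof.
rewrite -lerBlDr; apply: le_distL => v span_v.
rewrite lerBlDr [leRHS]addrC -lerBlDr; apply: le_distL => w span_w.
rewrite lerBlDr; apply: le_trans (distL_le _ (LspanD span_v span_w)) _.
by rewrite opprD addrACA [leRHS]addrC hnormD.
Qed.

Lemma distLZ_le a x n : dist (a *: x) n <= cabs a * dist x n.
Proof.
have [->|a_neq0] := eqVneq a 0.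
  by rewrite scale0r cabs0 mul0r -(hnorm0 ip_inner) distL_le_hnorm.
have a_gt0 : 0 < cabs a.
  by rewrite lt_def cabs_ge0 andbT; apply: contra a_neq0 => /eqP/cabs_eq0 ->.
rewrite mulrC -ler_pdivrMr //; apply: le_distL => y span_y.
by rewrite ler_pdivrMr // mulrC -hnormZ // scalerBr distL_le //; exact: LspanZ.
Qed.

Lemma distLZ a x n : dist (a *: x) n = cabs a * dist x n.
Proof.
apply: (@homogeneous_of_le _ _ setT (dist ^~ n)) => //.
- by move=> y _; exact: distL_ge0.
- by move=> b y _; exact: distLZ_le.
Qed.

Lemma distLB x y n : dist (x - y) n <= dist x n + dist y n.
Proof.
apply: le_trans (distLD x (- y) n) _.
by rewrite -scaleN1r distLZ cabsN cabs1 mul1r.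
Qed.

Hypothesis e_orthonormal : orthonormal_basis ip e.

Lemma ip_e i j : ip (e i) (e j) = (i == j)%:R.
Proof. by case: e_orthonormal. Qed.

Lemma eq0_of_coef x : (forall n, ip x (e n) = 0) -> x = 0.
Proof. by case: e_orthonormal => _; apply. Qed.

Lemma hnorm_e n : hn (e n) = 1.
Proof. by rewrite /hnorm ip_e eqxx sqrtr1. Qed.

Lemma ip_sum_e (c : nat -> R[i]) N n :
  ip (\sum_(k < N) c k *: e k) (e n) = if (n < N)%N then c n else 0.
Proof.
rewrite (big_morph (ip ^~ (e n)) (fun u v => ipD ip_inner u v (e n))
  (ip0l ip_inner (e n))).
under eq_bigr => k _ do rewrite ipZ // ip_e mulr_natr mulrb.
by rewrite -big_mkcond big_ord1_eq.
Qed.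

Lemma cabs_coef_le_distL x n : cabs (coef ip e x n) <= dist x n.
Proof.
apply: le_distL => _ [c ->].
have -> : coef ip e x n = ip (x - \sum_(k < n) c k *: e k) (e n).
  by rewrite ipB // ip_sum_e ltnn subr0.
by rewrite -[hn _]mulr1 -(hnorm_e n) cabs_ip_le.
Qed.

End DistanceToSpan.

Section NatSup.
Variable R : realType.
Implicit Types (f : nat -> R) (M : R).

Lemma le_sup_range f n : has_ubound (range f) -> f n <= sup (range f).
Proof. by move=> f_bnd; apply: ub_le_sup => //; exists n. Qed.

Lemma sup_range_le f M : (forall n, f n <= M) -> sup (range f) <= M.
Proof. by move=> f_le; apply: ge_sup; [exists (f 0%N), 0%N | move=> _ [n _ <-]]. Qed.

Lemma has_ubound_range f M : (forall n, f n <= M) -> has_ubound (range f).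
Proof. by move=> f_le; exists M => _ [n _ <-]. Qed.

End NatSup.

Section Weights.
Variable R : realType.

Lemma wt_ge0 n k : 0 <= wt R n k.
Proof. by rewrite exprn_ge0 ?ler0n. Qed.

Lemma wt_0 n : wt R n 0 = 1.
Proof. exact: expr0. Qed.

Lemma wt_le m n k : (m <= n)%N -> wt R m k <= wt R n k.
Proof. by move=> le_mn; rewrite lerXn2r ?nnegrE ?ler0n ?ler_nat. Qed.

Lemma sqr_succ_wt n k :
  (n.+1%:R) ^+ 2 * wt R n k = wt R n (k + 2) + 2 * wt R n (k + 1) + wt R n k.
Proof. by rewrite /wt !exprD -addn1 natrD; ring. Qed.

End Weights.

Section RapidlyDecreasing.
Variables (R : realType) (H : lmodType R[i]) (ip : H -> H -> R[i]) (e : nat -> H).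
Hypothesis ip_inner : is_inner_product ip.
Local Notation hn := (hnorm ip).
Local Notation dist := (distL ip e).
Local Notation Hra := (H_ra ip e).
Local Notation q := (q ip e).
Implicit Types (x y : H) (a : R[i]).

Lemma q_ub x k n : Hra x -> wt R n k * dist x n <= q k x.
Proof. by move=> Hx; apply: le_sup_range (Hx k). Qed.

Lemma q_le x k M : (forall n, wt R n k * dist x n <= M) -> q k x <= M.
Proof. exact: sup_range_le. Qed.

Lemma H_ra_of_bound x : (forall k, exists M, forall n, wt R n k * dist x n <= M) -> Hra x.
Proof. by move=> bnd k; have [M le_M] := bnd k; exact: has_ubound_range le_M. Qed.

Lemma q_ge0 x k : Hra x -> 0 <= q k x.
Proof.
by move=> Hx; apply: le_trans (q_ub k 0 Hx); rewrite mulr_ge0 ?wt_ge0 ?distL_ge0.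
Qed.

Lemma hnorm_le_q0 x : Hra x -> hn x <= q 0 x.
Proof. by move=> Hx; have := q_ub 0 0 Hx; rewrite wt_0 mul1r distL0. Qed.

Lemma H_ra0 : Hra 0.
Proof.
apply: H_ra_of_bound => k; exists 0 => n.
by rewrite mulr_ge0_le0 ?wt_ge0 // -(hnorm0 ip_inner) distL_le_hnorm.
Qed.

Lemma H_ra_lin a x y : Hra x -> Hra y -> Hra (a *: x + y).
Proof.
move=> Hx Hy; apply: H_ra_of_bound => k; exists (cabs a * q k x + q k y) => n.
apply: le_trans (_ : wt R n k * (cabs a * dist x n + dist y n) <= _).
  by rewrite ler_wpM2l ?wt_ge0 // -distLZ // distLD.
by rewrite mulrDr mulrCA lerD ?q_ub // ler_wpM2l ?cabs_ge0 ?q_ub.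
Qed.

Lemma H_raZ a x : Hra x -> Hra (a *: x).
Proof. by move=> Hx; rewrite -[_ *: _]addr0; apply: H_ra_lin H_ra0. Qed.

Lemma H_raB x y : Hra x -> Hra y -> Hra (x - y).
Proof. by move=> Hx Hy; rewrite -scaleN1r addrC; apply: H_ra_lin. Qed.

Lemma qD k x y : Hra x -> Hra y -> q k (x + y) <= q k x + q k y.
Proof.
move=> Hx Hy; apply: q_le => n.
apply: le_trans (_ : wt R n k * (dist x n + dist y n) <= _).
  by rewrite ler_wpM2l ?wt_ge0 ?distLD.
by rewrite mulrDr lerD ?q_ub.
Qed.

Lemma qZ k a x : Hra x -> q k (a *: x) = cabs a * q k x.
Proof.
apply: homogeneous_of_le => [b y|y|b y Hy]; [exact: H_raZ | exact: q_ge0 |].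
by apply: q_le => n; rewrite distLZ // mulrCA ler_wpM2l ?cabs_ge0 ?q_ub.
Qed.

Lemma q_separating x : Hra x -> (forall k, q k x = 0) -> x = 0.
Proof.
move=> Hx q_x0; apply: (hnorm_eq0 ip_inner); apply/le_anti.
by rewrite hnorm_ge0 // -(q_x0 0%N) hnorm_le_q0.
Qed.

End RapidlyDecreasing.

Section SequenceSpace.
Variable R : realType.
Local Notation s := (@s_space R).
Local Notation sn := (@s_norm R).
Implicit Types (a b : nat -> R[i]).

Lemma s_norm_ub a k n : s a -> wt R n k * cabs (a n) <= sn k a.
Proof. by move=> sa; apply: le_sup_range (sa k). Qed.

Lemma s_norm_ge0 a k : s a -> 0 <= sn k a.
Proof.
by move=> sa; apply: le_trans (s_norm_ub k 0 sa); rewrite mulr_ge0 ?wt_ge0 ?cabs_ge0.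
Qed.

Lemma s_spaceB a b : s a -> s b -> s (a - b).
Proof.
move=> sa sb k; apply: (has_ubound_range (M := sn k a + sn k b)) => n.
apply: le_trans (_ : wt R n k * (cabs (a n) + cabs (b n)) <= _).
  by rewrite ler_wpM2l ?wt_ge0 // -(cabsN (b n)) cabsD.
by rewrite mulrDr lerD ?s_norm_ub.
Qed.

Definition s_tail_bound a k := sn k a + 2 * sn (k + 1) a + sn (k + 2) a.

Lemma s_tail_bound_ge0 a k : s a -> 0 <= s_tail_bound a k.
Proof. by move=> sa; rewrite !addr_ge0 ?mulr_ge0 ?s_norm_ge0. Qed.

Lemma wt_cabs_le_s_tail_bound a k n : s a ->
  wt R n k * cabs (a n) <= s_tail_bound a k / n.+1%:R ^+ 2.
Proof.
move=> sa; rewrite ler_pdivlMr ?exprn_gt0 ?ltr0n //.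
have -> : wt R n k * cabs (a n) * n.+1%:R ^+ 2 = wt R n (k + 2) * cabs (a n)
    + 2 * (wt R n (k + 1) * cabs (a n)) + wt R n k * cabs (a n).
  transitivity (cabs (a n) * (n.+1%:R ^+ 2 * wt R n k)); first by ring.
  by rewrite sqr_succ_wt; ring.
have := s_norm_ub k n sa; have := s_norm_ub (k + 1) n sa.
have := s_norm_ub (k + 2) n sa; rewrite /s_tail_bound; lra.
Qed.

Lemma sum_inv_sqr_le N : \sum_(j < N) ((j.+1%:R : R) ^+ 2)^-1 <= 2 - 2 / N.+1%:R.
Proof.
elim: N => [|N IH]; first by rewrite big_ord0 divr1 subrr.
rewrite big_ord_recr /=; apply: le_trans (lerD IH (lexx _)) _.
have -> : (N.+2%:R : R) = N.+1%:R + 1 by rewrite -natr1.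
set x : R := N.+1%:R; have x_ge1 : 1 <= x by rewrite ler1n.
rewrite -subr_ge0.
have -> : 2 - 2 / (x + 1) - (2 - 2 / x + (x ^+ 2)^-1) = (x - 1) / (x ^+ 2 * (x + 1)).
  by field; rewrite !lt0r_neq0 //; lra.
by rewrite divr_ge0 ?mulr_ge0 ?sqr_ge0 //; lra.
Qed.

Lemma wt_tail_le a k n N : s a -> (n <= N)%N ->
  wt R n k * \sum_(n <= j < N) cabs (a j) <= 2 * s_tail_bound a k.
Proof.
move=> sa le_nN; rewrite mulr_sumr.
apply: le_trans (_ : \sum_(n <= j < N) s_tail_bound a k / j.+1%:R ^+ 2 <= _).
  apply: ler_sum_nat => j /andP[le_nj _].
  apply: le_trans (wt_cabs_le_s_tail_bound k j sa).
  by rewrite ler_wpM2r ?cabs_ge0 ?wt_le.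
have term_ge0 j : 0 <= s_tail_bound a k / j.+1%:R ^+ 2.
  by rewrite divr_ge0 ?s_tail_bound_ge0 ?sqr_ge0.
apply: le_trans (_ : \sum_(0 <= j < N) s_tail_bound a k / j.+1%:R ^+ 2 <= _).
  by rewrite (big_cat_nat (leq0n n) le_nN) /= lerDr sumr_ge0.
rewrite big_mkord -mulr_sumr mulrC ler_wpM2r ?s_tail_bound_ge0 //.
by apply: le_trans (sum_inv_sqr_le N) _; rewrite gerBl divr_ge0.
Qed.

End SequenceSpace.

Section Synthesis.
Variables (R : realType) (H : lmodType R[i]) (ip : H -> H -> R[i]) (e : nat -> H).
Hypothesis ip_inner : is_inner_product ip.
Hypothesis e_orthonormal : orthonormal_basis ip e.
Hypothesis H_complete : hcomplete ip.
Local Notation hn := (hnorm ip).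
Local Notation dist := (distL ip e).
Local Notation s := (@s_space R).
Implicit Types (a b : nat -> R[i]) (u : nat -> H) (x y l : H).

Definition hnorm_cvg u l :=
  forall eps : R, 0 < eps -> exists N, forall n, (N <= n)%N -> hn (u n - l) < eps.

Lemma hnorm_cvgB u l x : hnorm_cvg u l -> hnorm_cvg (fun n => x - u n) (x - l).
Proof.
move=> ul eps eps0; have [N ulN] := ul eps eps0; exists N => n le_Nn.
by rewrite opprB addrC addrA subrK hnormB // ulN.
Qed.

Lemma wt_distL_le_cvg u l (w r : R) n N : 0 <= w -> hnorm_cvg u l ->
  (forall m, (N <= m)%N -> w * dist (u m) n <= r) -> w * dist l n <= r.
Proof.
move=> w_ge0 ul bnd; apply/ler_addgt0Pr => d d0.
have w1_gt0 : 0 < w + 1 by rewrite ltr_wpDl.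
have [M ulM] := ul _ (divr_gt0 d0 w1_gt0); set m := maxn N M.
have := ulM m (leq_maxr _ _); rewrite ltr_pdivlMr // => close.
apply: le_trans (_ : w * (dist (u m) n + hn (l - u m)) <= _).
  by rewrite ler_wpM2l ?distL_lipschitz.
have h_ge0 := hnorm_ge0 ip (u m - l); have w_dist_le := bnd m (leq_maxl _ _).
rewrite mulrDr [hn (l - _)]hnormB //; nra.
Qed.

Lemma ip_cvg_const u l z c N : hnorm_cvg u l ->
  (forall m, (N <= m)%N -> ip (u m) z = c) -> ip l z = c.
Proof.
move=> ul uc; apply/eqP; rewrite -subr_eq0; apply/eqP/cabs_small_eq0 => eps eps0.
have z1_gt0 : 0 < hn z + 1 by rewrite ltr_wpDl ?hnorm_ge0.
have [M ulM] := ul _ (divr_gt0 eps0 z1_gt0); set m := maxn N M.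
have := ulM m (leq_maxr _ _); rewrite ltr_pdivlMr // => close.
rewrite -(uc m (leq_maxl _ _)) -ipB // (le_trans (cabs_ip_le ip_inner _ _)) //.
have h_ge0 := hnorm_ge0 ip (u m - l); have z_ge0 := hnorm_ge0 ip z.
rewrite [hn (l - _)]hnormB //; nra.
Qed.

Definition psum a N : H := \sum_(k < N) a k *: e k.

Lemma Lspan_psum a N : Lspan e N (psum a N).
Proof. by exists a. Qed.

Lemma hnorm_psumB_le a n N : (n <= N)%N ->
  hn (psum a N - psum a n) <= \sum_(n <= j < N) cabs (a j).
Proof.
move=> le_nN; rewrite /psum -!(big_mkord xpredT (fun j => a j *: e j)).
rewrite (big_cat_nat (leq0n n) le_nN) /= addrAC subrr add0r.
elim/big_ind2: _ => [|r u t v ur vt|j _]; first by rewrite hnorm0.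
  by apply: le_trans (hnormD ip_inner u v) _; exact: lerD.
by rewrite hnormZ // hnorm_e // mulr1.
Qed.

Lemma wt_psumB_le a k n N : s a -> (n <= N)%N ->
  wt R n k * hn (psum a N - psum a n) <= 2 * s_tail_bound a k.
Proof.
move=> sa le_nN; apply: le_trans (wt_tail_le k sa le_nN).
by rewrite ler_wpM2l ?wt_ge0 ?hnorm_psumB_le.
Qed.

Lemma psum_cauchy a : s a -> forall eps : R, 0 < eps -> exists N, forall m n,
  (N <= m)%N -> (N <= n)%N -> hn (psum a m - psum a n) < eps.
Proof.
move=> sa eps eps0; set B := 2 * s_tail_bound a 1.
exists (Num.bound (B / eps)).+1 => m n.
wlog le_nm : m n / (n <= m)%N => [sym|_ le_Nn].
  have [le_nm|/ltnW le_mn] := leqP n m; first exact: sym.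
  by move=> le_Nm le_Nn; rewrite hnormB //; exact: sym.
have := wt_psumB_le 1 sa le_nm; rewrite /wt expr1 -/B => wt_le.
have B_lt : B < n%:R * eps.
  rewrite -ltr_pdivrMr //; apply: lt_le_trans (archi_boundP _) _.
    by rewrite divr_ge0 ?mulr_ge0 ?s_tail_bound_ge0 ?ltW.
  by rewrite ler_nat ltnW.
have := hnorm_ge0 ip (psum a m - psum a n); have := ler0n R n; nra.
Qed.

(* [xget] returns 0 when the partial sums have no limit. *)
Definition synthesis a : H := xget 0 (hnorm_cvg (psum a)).

Lemma synthesis_cvg a : s a -> hnorm_cvg (psum a) (synthesis a).
Proof. by move=> sa; apply: xgetPex; exact: H_complete (psum_cauchy sa). Qed.

Lemma ip_synthesis_e a n : s a -> ip (synthesis a) (e n) = a n.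
Proof.
move=> sa; apply: (ip_cvg_const (N := n.+1) (synthesis_cvg sa)) => m lt_nm.
by rewrite ip_sum_e // lt_nm.
Qed.

Lemma coef_synthesis a : s a -> coef ip e (synthesis a) = a.
Proof. by move=> sa; apply: funext => n; exact: ip_synthesis_e. Qed.

Lemma synthesis_coef x : s (coef ip e x) -> synthesis (coef ip e x) = x.
Proof.
move=> sx; apply/eqP; rewrite -subr_eq0; apply/eqP/(eq0_of_coef e_orthonormal) => n.
by rewrite ipB // ip_synthesis_e //; exact: subrr.
Qed.

Lemma synthesisB a b : s a -> s b -> synthesis (a - b) = synthesis a - synthesis b.
Proof.
move=> sa sb; apply/eqP; rewrite -subr_eq0; apply/eqP/(eq0_of_coef e_orthonormal) => n.
rewrite !ipB // !ip_synthesis_e //; last by apply: s_spaceB.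
by rewrite -[(a - b) n]/(a n - b n) subrr.
Qed.

Lemma wt_distL_synthesis_le a k n : s a ->
  wt R n k * dist (synthesis a) n <= 2 * s_tail_bound a k.
Proof.
move=> sa; apply: (wt_distL_le_cvg (N := n) (wt_ge0 _ _ _) (synthesis_cvg sa)).
move=> m le_nm; apply: le_trans (wt_psumB_le k sa le_nm).
by rewrite ler_wpM2l ?wt_ge0 //; apply: distL_le; exact: Lspan_psum.
Qed.

End Synthesis.

Section LocalBoundContinuity.
Variables (R : realType) (V W : lmodType R[i]).
Variables (S : set V) (p : nat -> V -> R) (S' : set W) (p' : nat -> W -> R).
Variable f : V -> W.
Hypothesis SB : forall x y, S x -> S y -> S (x - y).
Hypothesis f_into : forall x, S x -> S' (f x).
Hypothesis fB : forall x y, S x -> S y -> f (x - y) = f x - f y.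

Lemma sn_continuous_of_local_bound :
    (forall k, exists K (c : R), 0 < c /\ forall x d, S x ->
       (forall i, (i <= K)%N -> p i x < d) ->
       forall j, (j <= k)%N -> p' j (f x) < c * d) ->
  sn_continuous S p S' p' f.
Proof.
move=> local_bound U [_ U_open]; split=> [x []//|x [Sx Ufx]].
have [k [eps [eps0 ball_U]]] := U_open _ Ufx.
have [K [c [c0 f_small]]] := local_bound k.
exists K, (eps / c); split=> [|y [Sy y_near]]; first by rewrite divr_gt0.
split=> //; apply: ball_U; split=> [|j le_jk]; first exact: f_into.
have -> : eps = c * (eps / c) by rewrite mulrC divfK ?lt0r_neq0.
by rewrite -fB //; apply: f_small => //; exact: SB.
Qed.

End LocalBoundContinuity.

Section CoefficientIsomorphism.
Variables (R : realType) (H : lmodType R[i]) (ip : H -> H -> R[i]) (e : nat -> H).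
Hypothesis ip_inner : is_inner_product ip.
Hypothesis e_orthonormal : orthonormal_basis ip e.
Hypothesis H_complete : hcomplete ip.
Local Notation dist := (distL ip e).
Local Notation Hra := (H_ra ip e).
Local Notation q := (q ip e).
Local Notation s := (@s_space R).
Local Notation coef := (coef ip e).
Local Notation synthesis := (synthesis ip e).
Implicit Types (x y : H) (a : R[i]) (b : nat -> R[i]).

Lemma coef_lin a x y : coef (a *: x + y) = a *: coef x + coef y.
Proof. by apply: funext => n; rewrite /coef ipDl. Qed.

Lemma coefB x y : coef (x - y) = coef x - coef y.
Proof. by apply: funext => n; rewrite /coef ipB. Qed.

Lemma wt_cabs_coef_le_q x k n : Hra x -> wt R n k * cabs (coef x n) <= q k x.
Proof.
move=> Hx; apply: le_trans (q_ub k n Hx).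
by rewrite ler_wpM2l ?wt_ge0 ?cabs_coef_le_distL.
Qed.

Lemma s_space_coef x : Hra x -> s (coef x).
Proof. by move=> Hx k; apply: has_ubound_range => n; exact: wt_cabs_coef_le_q. Qed.

Lemma s_norm_coef_le_q x k : Hra x -> s_norm k (coef x) <= q k x.
Proof. by move=> Hx; apply: sup_range_le => n; exact: wt_cabs_coef_le_q. Qed.

Lemma H_ra_synthesis b : s b -> Hra (synthesis b).
Proof.
move=> sb; apply: H_ra_of_bound => k; exists (2 * s_tail_bound b k) => n.
exact: wt_distL_synthesis_le.
Qed.

Lemma q_synthesis_le b k : s b -> q k (synthesis b) <= 2 * s_tail_bound b k.
Proof. by move=> sb; apply: q_le => n; exact: wt_distL_synthesis_le. Qed.

Lemma H_ra_iff_s_space_coef x : Hra x <-> s (coef x).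
Proof.
split=> [|sx]; first exact: s_space_coef.
rewrite -(synthesis_coef ip_inner e_orthonormal H_complete sx).
exact: H_ra_synthesis.
Qed.

Lemma H_ra_complete : sn_complete Hra q.
Proof.
move=> u Hu u_cauchy.
have [l ul] : exists l, hnorm_cvg ip u l.
  apply: H_complete => eps eps0; have [N uN] := u_cauchy 0%N eps eps0.
  exists N => m n le_Nm le_Nn.
  apply: le_lt_trans (uN m n le_Nm le_Nn).
  exact: hnorm_le_q0 (H_raB ip_inner (Hu m) (Hu n)).
have tail k eps : 0 < eps -> exists N, forall n, (N <= n)%N ->
    forall j, wt R j k * dist (u n - l) j <= eps.
  move=> eps0; have [N uN] := u_cauchy k eps eps0; exists N => n le_Nn j.
  have ul_n := hnorm_cvgB ip_inner (u n) ul.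
  apply: (wt_distL_le_cvg ip_inner (N := N) (wt_ge0 _ _ _) ul_n).
  move=> m le_Nm; apply: ltW (le_lt_trans _ (uN n m le_Nn le_Nm)).
  exact: q_ub (H_raB ip_inner (Hu n) (Hu m)).
have Hl : Hra l.
  apply: H_ra_of_bound => k; have [N uN] := tail k 1 ltr01.
  exists (q k (u N) + 1) => j.
  have -> : l = u N - (u N - l) by rewrite opprB addrC subrK.
  apply: le_trans (_ : wt R j k * (dist (u N) j + dist (u N - l) j) <= _).
    by rewrite ler_wpM2l ?wt_ge0 ?distLB.
  by rewrite mulrDr lerD ?q_ub ?uN.
exists l => // k eps eps0.
have [N uN] := tail k (eps / 2) (divr_gt0 eps0 (ltr0Sn _ 1)).
exists N => n le_Nn; apply: le_lt_trans (q_le (uN n le_Nn)) _; lra.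
Qed.

Lemma coef_continuous : sn_continuous Hra q s (@s_norm R) coef.
Proof.
apply: sn_continuous_of_local_bound => [x y|x|x y _ _|k].
- exact: H_raB.
- exact: s_space_coef.
- exact: coefB.
exists k, 1; split=> // x d Hx small j le_jk; rewrite mul1r.
exact: le_lt_trans (s_norm_coef_le_q _ Hx) (small j le_jk).
Qed.

Lemma synthesis_continuous : sn_continuous s (@s_norm R) Hra q synthesis.
Proof.
apply: sn_continuous_of_local_bound => [b c|b|b c|k].
- exact: s_spaceB.
- exact: H_ra_synthesis.
- exact: synthesisB.
exists (k + 2)%N, 8; split=> // b d sb small j le_jk.
apply: le_lt_trans (q_synthesis_le _ sb) _; rewrite /s_tail_bound.
have := small j (leq_trans le_jk (leq_addr _ _)).
have := small (j + 1)%N (leq_add le_jk (isT : (1 <= 2)%N)).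
have := small (j + 2)%N (leq_add le_jk (leqnn 2)); lra.
Qed.

End CoefficientIsomorphism.

Theorem theorem2p2 (R : realType) (H : lmodType R[i]) (ip : H -> H -> R[i])
  (e : nat -> H) :
  is_hilbert ip -> orthonormal_basis ip e ->
  [/\ frechet_seminorms (H_ra ip e) (q ip e),
      (forall x : H, H_ra ip e x <-> @s_space R (coef ip e x)) &
      top_iso (H_ra ip e) (q ip e) (@s_space R) (@s_norm R) (coef ip e)].
Proof.
move=> [ip_inner H_complete] e_orthonormal; split.
- split.
  + by split=> [|a x y]; [exact: H_ra0 | exact: H_ra_lin].
  + by move=> k; split=> [x|x y|a x]; [exact: q_ge0 | exact: qD | exact: qZ].
  + exact: q_separating.
  + exact: H_ra_complete.
- exact: H_ra_iff_s_space_coef.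
- split=> [x|a x y _ _||]; first exact: s_space_coef.
  + exact: coef_lin.
  + exact: coef_continuous.
  exists (synthesis ip e); split=> [b|x Hx|b|].
  + exact: H_ra_synthesis.
  + exact/synthesis_coef/s_space_coef.
  + exact: coef_synthesis.
  + exact: synthesis_continuous.
Qed.
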